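(* For every $n\ge1$, the positive monomial $P(x)=\prod_{i=1}^n x_i$ on $\{0,1\}^n$ has a quadratization using $\lfloor (n-1)/2\rfloor$ auxiliary variables.
   Context: A quadratization of $f:\{0,1\}^n\to\mathbb{R}$ using $m$ auxiliary variables is a polynomial $g(x,y)$ of degree at most $2$ in $x_1,\ldots,x_n,y_1,\ldots,y_m$ such that $f(x)=\min\{g(x,y):y\in\{0,1\}^m\}$ for all $x\in\{0,1\}^n$. *)

From HB Require Import structures.
From mathcomp Require Import all_boot all_order all_algebra.
Set Implicit Arguments. Unset Strict Implicit. Unset Printing Implicit Defensive.
Import Order.TTheory GRing.Theory Num.Theory.
Local Open Scope ring_scope.

Record quad_poly (R : nzRingType) (N : nat) := QuadPoly {
  qp_const : R;
  qp_lin : 'I_N -> R;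
  qp_quad : 'I_N -> 'I_N -> R }.

Definition qp_eval (R : nzRingType) (N : nat) (g : quad_poly R N)
    (z : 'I_N -> bool) : R :=
  qp_const g + \sum_(i < N) qp_lin g i * (z i)%:R
  + \sum_(i < N) \sum_(j < N) qp_quad g i j * (z i)%:R * (z j)%:R.

Definition concat_bits (n m : nat) (x : {ffun 'I_n -> bool})
    (y : {ffun 'I_m -> bool}) : 'I_(n + m) -> bool :=
  fun k => match split k with inl i => x i | inr j => y j end.

(* g is a quadratization of f using m auxiliary variables:
   f(x) = min_{y in {0,1}^m} g(x,y) for all x in {0,1}^n. *)
Definition is_quadratization (R : realFieldType) (n m : nat)
    (f : {ffun 'I_n -> bool} -> R) (g : quad_poly R (n + m)) : Prop :=
  forall x : {ffun 'I_n -> bool},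
    (exists y : {ffun 'I_m -> bool}, qp_eval g (concat_bits x y) = f x) /\
    (forall y : {ffun 'I_m -> bool}, f x <= qp_eval g (concat_bits x y)).

Definition has_quadratization (R : realFieldType) (n m : nat)
    (f : {ffun 'I_n -> bool} -> R) : Prop :=
  exists g : quad_poly R (n + m), is_quadratization f g.

Definition pos_monomial (R : nzRingType) (n : nat) (x : {ffun 'I_n -> bool}) : R :=
  \prod_(i < n) (x i)%:R.

(* With k = floor((n-1)/2), give the variables positive integer weights w summing to 2k+2 >= n, and let
   s = sum_i w_i x_i.  Then prod_i x_i = [s = 2k+2], and
     g(x, y) = s(s-1)/2 + sum_(j < k) y_j (4j+3-2s)
   is quadratic.  For fixed x the minimum over y takes y_j = 1 exactly when 4j+3 < 2s, i.e.
   j < floor(s/2), and the resulting minimum is 0 for s <= 2k+1 and 1 for s = 2k+2. *)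
From HB Require Import structures.
From mathcomp Require Import all_boot all_order all_algebra.
From mathcomp Require Import ring zify.
Set Implicit Arguments. Unset Strict Implicit. Unset Printing Implicit Defensive.
Import Order.TTheory GRing.Theory Num.Theory.
Local Open Scope ring_scope.

Lemma sum_split (V : nmodType) (n m : nat) (F : ('I_n + 'I_m)%type -> V) :
  \sum_(k < n + m) F (split k) = \sum_(i < n) F (inl i) + \sum_(j < m) F (inr j).
Proof.
rewrite big_split_ord /=; congr (_ + _); apply: eq_bigr => i _.
  by rewrite (unsplitK (inl i)).
by rewrite (unsplitK (inr i)).
Qed.

Section AuxCost.
Variable R : realFieldType.

Definition aux_cost (s j : nat) : R := (4 * j + 3)%:R - 2 * s%:R.

Lemma aux_cost_lt0 (s j : nat) : (aux_cost s j < 0) = (j < s./2)%N.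
Proof.
rewrite subr_lt0 -natrM ltr_nat.
have := odd_double_half s; rewrite -muln2; case: (odd s) => /=; lia.
Qed.

Lemma aux_cost_min (s j : nat) (b : bool) :
  (j < s./2)%N%:R * aux_cost s j <= b%:R * aux_cost s j.
Proof.
rewrite -aux_cost_lt0; case: ltrP => [c_lt0 | c_ge0] /=.
  by case: b; rewrite ?mul1r ?mul0r // ltW.
by case: b; rewrite ?mul1r ?mul0r.
Qed.

Lemma sum_aux_cost (c s : nat) :
  \sum_(j < c) aux_cost s j = (c * (2 * c + 1))%:R - 2 * c%:R * s%:R.
Proof.
elim: c => [|c IH]; first by rewrite big_ord0 mul0n mulr0 mul0r subr0.
rewrite big_ord_recr /= IH /aux_cost -addn1 !natrD !natrM !natrD !natrM; ring.
Qed.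

Lemma aux_cost_optimum (k s : nat) : (s <= k.*2.+2)%N ->
  s%:R * (s%:R - 1) / 2 + \sum_(j < k) (j < s./2)%N%:R * aux_cost s j
  = (s == k.*2.+2)%:R.
Proof.
move=> s_le; have sE := odd_double_half s; rewrite -muln2 in sE.
set h := s./2 in sE *; set b := odd s in sE.
have -> : \sum_(j < k) (j < h)%N%:R * aux_cost s j = \sum_(j < k | (j < h)%N) aux_cost s j.
  by rewrite [RHS]big_mkcond; apply: eq_bigr => j _; case: ifP; rewrite ?mul1r ?mul0r.
have [h_le | k_lt] := leqP h k.
  rewrite -(big_ord_widen _ (aux_cost s)) // sum_aux_cost.
  have -> : (s == k.*2.+2) = false by apply/eqP; move: sE h_le; rewrite -muln2; lia.
  by rewrite -sE !natrD !natrM; case: b {sE}; rewrite /=; field.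
have [-> s_top] : h = k.+1 /\ s = k.*2.+2.
  by move: sE s_le; rewrite -muln2; case: b; lia.
rewrite (eq_bigl xpredT) => [|j]; last by rewrite /= ltnS ltnW.
by rewrite sum_aux_cost s_top eqxx -addn2 -muln2 !(natrD, natrM) /=; field.
Qed.

End AuxCost.

Lemma pos_monomialE (R : comNzRingType) (n : nat) (x : {ffun 'I_n -> bool}) :
  pos_monomial R x = [forall i, x i]%:R.
Proof.
rewrite /pos_monomial; case: (pickP (fun i => ~~ x i)) => [i xi_false | x_all].
  rewrite (bigD1 i) //= (negbTE xi_false) mul0r.
  by have /negbTE -> : ~~ [forall i, x i] by apply/forallPn; exists i.
rewrite big1 => [|i _]; last by have /negbFE -> := x_all i.
by have -> : [forall i, x i] by apply/forallP => i; apply/negbFE/x_all.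
Qed.

Section WeightedQuad.
Variable R : realFieldType.
Variables n m : nat.
Variable w : 'I_n -> nat.

Definition wsum (x : {ffun 'I_n -> bool}) : nat := \sum_(i < n) w i * x i.

Lemma wsum_le_total (x : {ffun 'I_n -> bool}) : (wsum x <= \sum_i w i)%N.
Proof. by apply: leq_sum => i _; case: (x i); rewrite ?muln1 ?muln0. Qed.

Lemma wsum_eq_total (x : {ffun 'I_n -> bool}) : (forall i, 0 < w i)%N ->
  (wsum x == \sum_i w i) = [forall i, x i].
Proof.
move=> w_pos.
have total_split : (\sum_i w i = wsum x + \sum_i w i * ~~ x i)%N.
  rewrite -big_split; apply: eq_bigr => i _.
  by case: (x i); rewrite /= ?muln0 ?muln1 ?addn0.
rewrite total_split -{1}[wsum x]addn0 eqn_add2l eq_sym sum_nat_eq0.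
apply: eq_forallb => i; rewrite muln_eq0 (gtn_eqF (w_pos i)).
by case: (x i).
Qed.

Definition wq_lin (u : ('I_n + 'I_m)%type) : R :=
  match u with inl i => - (w i)%:R / 2 | inr j => (4 * j + 3)%:R end.

Definition wq_quad (u v : ('I_n + 'I_m)%type) : R :=
  match u, v with
  | inl i, inl i' => (w i)%:R * (w i')%:R / 2
  | inl i, inr j => -2 * (w i)%:R
  | _, _ => 0
  end.

Definition weighted_quad : quad_poly R (n + m) :=
  QuadPoly 0 (fun k => wq_lin (split k)) (fun k l => wq_quad (split k) (split l)).

Lemma qp_eval_weighted_quad (x : {ffun 'I_n -> bool}) (y : {ffun 'I_m -> bool}) :
  qp_eval weighted_quad (concat_bits x y) =
  (wsum x)%:R * ((wsum x)%:R - 1) / 2 + \sum_(j < m) (y j)%:R * aux_cost R (wsum x) j.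
Proof.
set s := wsum x.
have sE : s%:R = \sum_(i < n) (w i)%:R * (x i)%:R :> R.
  by rewrite natr_sum; apply: eq_bigr => i _; rewrite natrM.
pose b (u : ('I_n + 'I_m)%type) := match u with inl i => x i | inr j => y j end.
pose z u : R := (b u)%:R.
have lin : \sum_(u < n + m) wq_lin (split u) * z (split u) =
    - s%:R / 2 + \sum_(j < m) (4 * j + 3)%:R * (y j)%:R.
  rewrite (sum_split (fun u => wq_lin u * z u)) sE -sumrN mulr_suml.
  by congr (_ + _); apply: eq_bigr => i _; rewrite /=; ring.
have quad_row u : \sum_(v < n + m) wq_quad (split u) (split v) * z (split u) * z (split v) =
    \sum_(i < n) wq_quad (split u) (inl i) * z (split u) * z (inl i)
    + \sum_(j < m) wq_quad (split u) (inr j) * z (split u) * z (inr j).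
  exact: (sum_split (fun v => wq_quad (split u) v * z (split u) * z v)).
have quad : \sum_(u < n + m) \sum_(v < n + m)
      wq_quad (split u) (split v) * z (split u) * z (split v) =
    s%:R * s%:R / 2 - 2 * s%:R * \sum_(j < m) (y j)%:R.
  rewrite (eq_bigr _ (fun u _ => quad_row u)).
  rewrite (sum_split (fun u => \sum_(i < n) wq_quad u (inl i) * z u * z (inl i)
                              + \sum_(j < m) wq_quad u (inr j) * z u * z (inr j))) /=.
  rewrite [X in _ + X]big1 ?addr0; last first.
    by move=> j _; rewrite !big1 ?addr0 // => ? _; rewrite !mul0r.
  rewrite big_split /= sE; congr (_ + _).
    rewrite !mulr_suml; apply: eq_bigr => i _.
    by rewrite mulr_sumr mulr_suml; apply: eq_bigr => i' _; rewrite /=; ring.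
  rewrite (mulrC 2) -mulrA -mulrN mulr_suml; apply: eq_bigr => i _.
  by rewrite -mulNr !mulr_sumr; apply: eq_bigr => j _; rewrite /=; ring.
rewrite /qp_eval (_ : concat_bits x y = b \o split) // /= add0r lin quad /aux_cost.
have -> : \sum_(j < m) (y j)%:R * ((4 * j + 3)%:R - 2 * s%:R) =
    \sum_(j < m) (4 * j + 3)%:R * (y j)%:R - 2 * s%:R * \sum_(j < m) (y j)%:R :> R.
  by rewrite mulr_sumr -sumrB; apply: eq_bigr => j _; ring.
ring.
Qed.

End WeightedQuad.

Theorem weighted_quad_quadratization (R : realFieldType) (n k : nat) (w : 'I_n -> nat) :
  (forall i, 0 < w i)%N -> (\sum_i w i)%N = k.*2.+2 ->
  is_quadratization (@pos_monomial R n) (weighted_quad R k w).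
Proof.
move=> w_pos w_total x.
have s_le : (wsum w x <= k.*2.+2)%N by rewrite -w_total wsum_le_total.
have fx : pos_monomial R x = (wsum w x == k.*2.+2)%:R.
  by rewrite pos_monomialE -w_total wsum_eq_total.
split.
  exists [ffun j : 'I_k => (j < (wsum w x)./2)%N].
  rewrite qp_eval_weighted_quad fx -(aux_cost_optimum R s_le).
  by congr (_ + _); apply: eq_bigr => j _; rewrite ffunE.
move=> y; rewrite qp_eval_weighted_quad fx -(aux_cost_optimum R s_le) lerD2l.
by apply: ler_sum => j _; apply: aux_cost_min.
Qed.

Theorem theorem5 (R : realFieldType) (n : nat) :
  (1 <= n)%N -> has_quadratization ((n - 1)./2) (@pos_monomial R n).
Proof.
case: n => [//|n] _; rewrite subn1 /=; set k := n./2.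
have n_le : (n.+1 <= k.*2.+2)%N.
  by have := odd_double_half n; rewrite -/k -muln2; case: (odd n) => /=; lia.
pose w (i : 'I_n.+1) := if i == ord0 then (k.*2.+3 - n.+1)%N else 1%N.
exists (weighted_quad R k w); apply: weighted_quad_quadratization => [i|].
  by rewrite /w; case: eqP => _ //; lia.
rewrite (bigD1 ord0) //= /w eqxx (eq_bigr (fun _ => 1%N)) => [|i /negbTE -> //].
rewrite sum1_card cardC1 card_ord; lia.
Qed.
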